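(* $\mathsf{D}_0(C_2^4)=5$ and $k_{\mathsf{D}}(C_2^4)=3$. Additionally, $\mathsf{D}_{1}(C_2^4)=5$ and $\mathsf{D}_{2}(C_2^4)=8$.
   Context: $C_2^4$ is the elementary abelian $2$-group of rank $4$. A sequence over a finite abelian group $G$ is a finite unordered list of elements with repetitions; zero-sum means its terms sum to $0$. $\mathsf{D}_k(G)$ ($k\in\mathbb{N}$) is the smallest $\ell$ such that every sequence over $G$ of length at least $\ell$ has $k$ disjoint non-empty zero-sum subsequences. It is known that there exists $\mathsf{D}_0(G)\in\mathbb{N}_0$ with $\mathsf{D}_k(G)=\mathsf{D}_0(G)+k\exp(G)$ for all sufficiently large $k$; $k_{\mathsf{D}}(G)$ is the minimal $k_0\in\mathbb{N}$ with $\mathsf{D}_k(G)=\mathsf{D}_0(G)+k\exp(G)$ for all $k\ge k_0$. *)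

From mathcomp Require Import all_boot all_order all_algebra.
Set Implicit Arguments. Unset Strict Implicit. Unset Printing Implicit Defensive.
Import GRing.Theory.
Local Open Scope ring_scope.

(* Sequences over G are modelled as [seq G]; order is irrelevant in all
   notions below (everything is invariant under permutation). *)

Definition has_k_disjoint_zs (G : zmodType) (k : nat) (s : seq G) : Prop :=
  exists ss : seq (seq G),
    [/\ size ss = k,
        all (fun t => t != [::]) ss,
        all (fun t => \sum_(x <- t) x == 0) ss
      & exists r : seq G, perm_eq s (flatten ss ++ r)].

Definition Dk_bound (G : zmodType) (k l : nat) : Prop :=
  forall s : seq G, (l <= size s)%N -> has_k_disjoint_zs k s.

Definition is_Dk (G : zmodType) (k d : nat) : Prop :=
  Dk_bound G k d /\ forall l, Dk_bound G k l -> (d <= l)%N.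

Definition is_exp (G : zmodType) (e : nat) : Prop :=
  [/\ (0 < e)%N, (forall g : G, g *+ e = 0)
    & forall m, (0 < m)%N -> (forall g : G, g *+ m = 0) -> (e <= m)%N].

Definition eventually_linear_from (G : zmodType) (d0 e k0 : nat) : Prop :=
  forall k, (k0 <= k)%N -> is_Dk G k (d0 + k * e).

Definition is_D0 (G : zmodType) (d0 : nat) : Prop :=
  exists e, is_exp G e /\ exists k0, eventually_linear_from G d0 e k0.

Definition is_kD (G : zmodType) (k0 : nat) : Prop :=
  exists d0 e, [/\ is_D0 G d0, is_exp G e, (1 <= k0)%N,
    eventually_linear_from G d0 e k0
  & forall k1, (1 <= k1)%N -> eventually_linear_from G d0 e k1 -> (k0 <= k1)%N].

Definition C2_4 : zmodType := 'rV['Z_2]_4.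

From mathcomp Require Import all_boot all_order all_algebra.
From mathcomp Require Import zify.
From Stdlib Require Import PeanoNat.
Set Implicit Arguments. Unset Strict Implicit. Unset Printing Implicit Defensive.
Import GRing.Theory.

(* Identify C_2^4 with 4-bit numbers under xor.  A zero term, or a repeated pair x, x,
   is a zero-sum block on its own, and min(3k+2, 2k+5) grows by at least 2 with k; so by
   induction on the length only sequences of distinct nonzero vectors remain, of which
   there are finitely many, and an exhaustive search finds the required blocks in each
   (for k >= 6 no such sequence is long enough).  Conversely, the search shows that
   [1;2;4;8], [1;2;3;4;5;6;8] and [1..10] are too short by one for k = 1, 2, 3, and
   appending pairs g, g raises the length by 2 but the number of disjoint blocks by at
   most 1.  Hence D_k = 2k+5 exactly from k = 3 on, while D_2 = 8 < 2*2+5. *)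

Lemma perm_cons_catP (T : eqType) (x : T) (s t u : seq T) :
  perm_eq (x :: s) (t ++ u) ->
  (exists t', perm_eq t (x :: t') /\ perm_eq s (t' ++ u)) \/
  (exists u', perm_eq u (x :: u') /\ perm_eq s (t ++ u')).
Proof.
move=> pxs; have : x \in t ++ u by rewrite -(perm_mem pxs) mem_head.
rewrite mem_cat => /orP[xt|xu].
  left; exists (rem x t); split; first exact: perm_to_rem.
  rewrite -(perm_cons x) (perm_trans pxs) //.
  by rewrite -cat_cons perm_cat2r perm_to_rem.
right; exists (rem x u); split; first exact: perm_to_rem.
rewrite -(perm_cons x) (perm_trans pxs) //.
by rewrite perm_sym -cat1s perm_catCA perm_cat2l perm_sym perm_to_rem.
Qed.

Lemma perm_map_cat_split (T U : eqType) (f : T -> U) l (t u : seq U) :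
  perm_eq (map f l) (t ++ u) ->
  exists l1 l2, [/\ perm_eq l (l1 ++ l2), perm_eq (map f l1) t & perm_eq (map f l2) u].
Proof.
elim: l t u => [|a l IH] t u /= pl.
  have [-> ->] : t = [::] /\ u = [::] by move/perm_size: pl; case: t; case: u.
  by exists [::], [::].
case/perm_cons_catP: pl => [[t' [pt pl]]|[u' [pu pl]]];
  have [l1 [l2 [pl12 p1 p2]]] := IH _ _ pl.
  exists (a :: l1), l2; split=> //; first by rewrite perm_cons.
  by rewrite perm_sym (perm_trans pt) // perm_cons perm_sym.
exists l1, (a :: l2); split=> //.
  by rewrite perm_sym -cat1s perm_catCA perm_cons perm_sym.
by rewrite perm_sym (perm_trans pu) // perm_cons perm_sym.
Qed.

Lemma not_uniq_perm_pair (T : eqType) (s : seq T) :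
  ~~ uniq s -> exists x s', perm_eq s [:: x, x & s'].
Proof.
elim: s => [//|a s IH] /=; rewrite negb_and negbK.
have [as_ _|_ /= /IH [x [s' ps]]] := boolP (a \in s).
  by exists a, (rem a s); rewrite perm_cons perm_to_rem.
exists x, (a :: s'); rewrite perm_sym -[[:: x, x, a & s']]/([:: x; x] ++ [:: a] ++ s').
by rewrite perm_catCA perm_cons perm_sym.
Qed.

Section DisjointZeroSums.
Local Open Scope ring_scope.
Variable G : zmodType.
Implicit Types (g : G) (s t u : seq G).

Lemma has_zs_perm k s s' :
  perm_eq s s' -> has_k_disjoint_zs k s <-> has_k_disjoint_zs k s'.
Proof.
have imp s1 s2 : perm_eq s1 s2 -> has_k_disjoint_zs k s1 -> has_k_disjoint_zs k s2.
  move=> p12 [ss [size_ss ne_ss zs_ss [r pr]]]; exists ss; split=> //; exists r.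
  by rewrite -(permPl p12).
by move=> pss; split; apply: imp; rewrite // perm_sym.
Qed.

Lemma has_zs0 s : has_k_disjoint_zs 0 s.
Proof. by exists [::]; split=> //; exists s. Qed.

Lemma has_zsS k s : has_k_disjoint_zs k.+1 s <->
  exists t u, [/\ t != [::], \sum_(x <- t) x = 0, perm_eq s (t ++ u)
                & has_k_disjoint_zs k u].
Proof.
split=> [[ss [size_ss ne_ss zs_ss [r pr]]]|].
  case: ss size_ss ne_ss zs_ss pr => [//|t ss] [size_ss].
  move=> /andP[ne_t ne_ss] /andP[/eqP zs_t zs_ss] pr.
  exists t, (flatten ss ++ r); split=> //; first by rewrite catA.
  by exists ss; split=> //; exists r.
case=> t [u [ne_t zs_t pu [ss [size_ss ne_ss zs_ss [r pr]]]]].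
exists (t :: ss); split=> /=; rewrite ?size_ss ?ne_t ?zs_t ?eqxx //; exists r.
by rewrite -catA (perm_trans pu) // perm_cat2l.
Qed.

Lemma has_zs_block k t u : t != [::] -> \sum_(x <- t) x = 0 ->
  has_k_disjoint_zs k u -> has_k_disjoint_zs k.+1 (t ++ u).
Proof. by move=> ne_t zs_t zs_u; apply/has_zsS; exists t, u. Qed.

Lemma has_zs_catr k s t : has_k_disjoint_zs k s -> has_k_disjoint_zs k (s ++ t).
Proof.
move=> [ss [size_ss ne_ss zs_ss [r pr]]]; exists ss; split=> //; exists (r ++ t).
by rewrite catA perm_cat2r.
Qed.

Lemma has_zs_catl k s t : has_k_disjoint_zs k s -> has_k_disjoint_zs k (t ++ s).
Proof.
have pst : perm_eq (s ++ t) (t ++ s) by rewrite perm_catC.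
by move/(has_zs_catr t)/(has_zs_perm _ pst).
Qed.

Lemma has_zs_pred k s : has_k_disjoint_zs k.+1 s -> has_k_disjoint_zs k s.
Proof.
case/has_zsS=> t [u [_ _ pu zs_u]].
by apply/(has_zs_perm _ pu)/has_zs_catl.
Qed.

Lemma has_zs_nil k : ~ has_k_disjoint_zs k.+1 ([::] : seq G).
Proof.
case/has_zsS=> t [u [ne_t _ pu _]].
by case: t ne_t pu => // x t _ /perm_size.
Qed.

Lemma has_zs_cons k g s : has_k_disjoint_zs k.+1 (g :: s) ->
  (exists t u, [/\ g + \sum_(x <- t) x = 0, perm_eq s (t ++ u)
                 & has_k_disjoint_zs k u])
  \/ has_k_disjoint_zs k.+1 s.
Proof.
elim: k g s => [|k IH] g s /has_zsS [t [u [ne_t zs_t /perm_cons_catP pu zs_u]]];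
  case: pu => [[t' [pt ps]]|[u' [pu ps]]];
  try by left; exists t', u; rewrite (perm_big _ pt) big_cons in zs_t.
  by right; apply/(has_zs_perm _ ps)/has_zs_block/has_zs0.
case: (IH g u' ((has_zs_perm _ pu).1 zs_u)) => [[t2 [u2 [zs_t2 pu' zs_u2]]]|zs_u'].
  left; exists t2, (t ++ u2); split=> //; last exact: has_zs_block.
  by rewrite (perm_trans ps) // perm_sym -perm_catCA perm_cat2l perm_sym.
by right; apply/(has_zs_perm _ ps)/has_zs_block.
Qed.

Lemma has_zs_subst k g t u : t != [::] -> \sum_(x <- t) x = g ->
  has_k_disjoint_zs k (g :: u) -> has_k_disjoint_zs k (t ++ u).
Proof.
case: k => [|k] ne_t sum_t; first by move=> _; apply: has_zs0.
case/has_zs_cons => [[t2 [u2 [zs_t2 pu zs_u2]]]|]; last exact: has_zs_catl.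
have ptu : perm_eq (t ++ u) ((t ++ t2) ++ u2) by rewrite -catA perm_cat2l.
apply/(has_zs_perm _ ptu)/has_zs_block => //; first by case: (t) ne_t.
by rewrite big_cat sum_t.
Qed.

Lemma has_zs_pairN k g s : g != 0 ->
  has_k_disjoint_zs k.+1 [:: g, - g & s] -> has_k_disjoint_zs k s.
Proof.
move=> nz_g /has_zs_cons [[t [u [zs_t /perm_cons_catP pu zs_u]]]|].
  case: pu => [[t' [_ ps]]|[u' [pu ps]]]; first exact/(has_zs_perm _ ps)/has_zs_catl.
  apply/(has_zs_perm _ ps)/(has_zs_subst _ _ ((has_zs_perm _ pu).1 zs_u)).
    by apply: contraNneq nz_g => t0; rewrite -zs_t t0 big_nil addr0.
  by apply/eqP; rewrite -addr_eq0 addrC zs_t.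
case/has_zs_cons => [[t [u [_ ps zs_u]]]|]; last exact: has_zs_pred.
exact/(has_zs_perm _ ps)/has_zs_catl.
Qed.

End DisjointZeroSums.

Lemma is_Dk_uniq (G : zmodType) k d1 d2 : is_Dk G k d1 -> is_Dk G k d2 -> d1 = d2.
Proof. by move=> [D1 min1] [D2 min2]; apply/eqP; rewrite eqn_leq min1 ?min2. Qed.

Lemma is_Dk_witness (G : zmodType) k d (w : seq G) : 0 < d ->
  Dk_bound G k d -> size w = d.-1 -> ~ has_k_disjoint_zs k w -> is_Dk G k d.
Proof.
move=> d_gt0 Dd size_w not_zs_w; split=> // l Dl; rewrite leqNgt.
by apply/negP => lt_l_d; apply/not_zs_w/Dl; rewrite size_w -ltnS prednK.
Qed.

Section Bitvec.
Local Open Scope ring_scope.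

Definition bitvec (n : nat) : C2_4 := \row_(i < 4) (Nat.testbit n i)%:R.

Definition bitvec_eqb0 (n : nat) : bool := all (fun i => ~~ Nat.testbit n i) (iota 0 4).

Lemma Z2_natr_xorb (a b : bool) : (xorb a b)%:R = a%:R + b%:R :> 'Z_2.
Proof. by case: a; case: b; apply/val_inj. Qed.

Lemma bitvec_lxor a b : bitvec (Nat.lxor a b) = bitvec a + bitvec b.
Proof. by apply/rowP => i; rewrite !mxE Nat.lxor_spec Z2_natr_xorb. Qed.

Lemma bitvec0 : bitvec 0 = 0.
Proof. by apply/rowP => i; rewrite !mxE Nat.bits_0. Qed.

Lemma bitvec_eq0 n : (bitvec n == 0) = bitvec_eqb0 n.
Proof.
apply/eqP/allP => [/rowP bits0 i|bits0].
  rewrite mem_iota => /= lt_i4; have := bits0 (Ordinal lt_i4); rewrite !mxE.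
  by case: (Nat.testbit n i) => // /(congr1 val).
apply/rowP => i; rewrite !mxE.
by have := bits0 i; rewrite mem_iota ltn_ord => /(_ isT) /negbTE ->.
Qed.

Lemma C24_addxx (x : C2_4) : x + x = 0.
Proof. by apply/rowP => i; rewrite !mxE; case: (x 0 i) => -[|[|//]] ?; apply/val_inj. Qed.

Lemma C24_oppr (x : C2_4) : - x = x.
Proof. by apply/eqP; rewrite eq_sym -addr_eq0 C24_addxx. Qed.

Definition nat_of_C24 (g : C2_4) : nat :=
  ((g ord0 (inord 0) != 0%R) + 2 * (g ord0 (inord 1) != 0%R) +
   4 * (g ord0 (inord 2) != 0%R) + 8 * (g ord0 (inord 3) != 0%R))%N.

Lemma testbit_bits4 (b0 b1 b2 b3 : bool) i : (i < 4)%N ->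
  Nat.testbit (b0 + 2 * b1 + 4 * b2 + 8 * b3) i = nth false [:: b0; b1; b2; b3] i.
Proof. by case: b0; case: b1; case: b2; case: b3; case: i => [|[|[|[|]]]]. Qed.

Lemma nat_of_C24K : cancel nat_of_C24 bitvec.
Proof.
have Z2_neq0 (x : 'Z_2) : x = (x != 0)%:R by case: x => -[|[|//]] ?; apply/val_inj.
move=> g; apply/rowP => i; rewrite mxE testbit_bits4 // [RHS]Z2_neq0.
case: i => -[|[|[|[|//]]]] lt_i4;
  by congr ((g ord0 _ != 0)%:R); apply/val_inj; rewrite /= inordK.
Qed.

Lemma nat_of_C24_lt16 g : (nat_of_C24 g < 16)%N.
Proof. by rewrite /nat_of_C24; do 4 case: (_ != 0). Qed.

End Bitvec.

(* Continuations and [if] (rather than [has]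
   and [||], whose arguments [vm_compute] evaluates eagerly) stop at the first success. *)
Fixpoint find_block (t : nat) (l : seq nat) (cont : seq nat -> bool) : bool :=
  if l is a :: l' then
    if find_block t l' (fun r => cont (a :: r)) then true
    else find_block (Nat.lxor t a) l' cont
  else if bitvec_eqb0 t then cont [::] else false.

(* The first term either lies in a block, which [find_block] completes, or is discarded. *)
Fixpoint zs_search (k : nat) (l : seq nat) : bool :=
  if k is k'.+1 then
    let fix search_from l :=
      if l is a :: l' then
        if find_block a l' (zs_search k') then true else search_from l'
      else false in
    search_from l
  else true.

Lemma zs_searchS k a l :
  zs_search k.+1 (a :: l) = find_block a l (zs_search k) || zs_search k.+1 l.
Proof. by []. Qed.

Lemma find_block_sound t (l : seq nat) (cont : seq nat -> bool) :
  find_block t l cont ->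
  exists B R, [/\ perm_eq l (B ++ R), (bitvec t + \sum_(x <- map bitvec B) x = 0)%R
                & cont R].
Proof.
elim: l t cont => [|a l IH] t cont /=.
  case: ifP => // t0 cont0; exists [::], [::].
  by rewrite big_nil addr0; split=> //; apply/eqP; rewrite bitvec_eq0.
case: ifP => [/IH [B [R [pl sB cR]]] _|_ /IH [B [R [pl sB cR]]]].
  exists B, (a :: R); split=> //.
  by rewrite perm_sym -cat1s perm_catCA perm_cons perm_sym.
exists (a :: B), R; split; rewrite ?perm_cons //.
by rewrite big_cons addrA -bitvec_lxor.
Qed.

Lemma find_block_complete t (l : seq nat) (cont : seq nat -> bool) B R :
  perm_eq l (B ++ R) -> (bitvec t + \sum_(x <- map bitvec B) x = 0)%R ->
  (forall r, perm_eq r R -> cont r) -> find_block t l cont.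
Proof.
elim: l t cont B R => [|a l IH] t cont B R /= pl sB cR.
  move/perm_size: pl sB cR; case: B => [|? ?] //; case: R => [|? ?] // _.
  by rewrite big_nil addr0 => /eqP; rewrite bitvec_eq0 => -> /(_ [::]) ->.
case/perm_cons_catP: pl => [[B' [pB pl]]|[R' [pR pl]]].
  case: ifP => // _; apply: IH pl _ cR.
  by move: sB; rewrite (perm_big _ (perm_map bitvec pB)) big_cons bitvec_lxor addrA.
rewrite (IH _ _ _ _ pl sB) // => r pr; apply: cR.
by rewrite perm_sym (perm_trans pR) // perm_cons perm_sym.
Qed.

Lemma zs_searchP k l : reflect (has_k_disjoint_zs k (map bitvec l)) (zs_search k l).
Proof.
elim: k l => [|k IHk] l; first exact/ReflectT/has_zs0.
elim: l => [|a l IHl]; first exact/ReflectF/has_zs_nil.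
rewrite zs_searchS; apply: (iffP orP) => [[]|].
- case/find_block_sound => B [R [pl sB /IHk zs_R]].
  have pl' : perm_eq (map bitvec (a :: B) ++ map bitvec R) (map bitvec (a :: l)).
    by rewrite -map_cat perm_map // perm_sym /= perm_cons.
  by apply/(has_zs_perm _ pl')/has_zs_block => //; rewrite big_cons.
- by move/IHl/(has_zs_catl [:: bitvec a]).
case/has_zs_cons => [[t [u [zs_t pl zs_u]]]|/IHl]; [left | by right].
have [B [R [pBR pB pR]]] := perm_map_cat_split pl.
apply: (find_block_complete pBR); first by rewrite (perm_big _ pB).
by move=> r pr; apply/IHk/(has_zs_perm _ (perm_trans (perm_map bitvec pr) pR)).
Qed.

Fixpoint subseqs_of_size (T : Type) (n : nat) (l : seq T) : seq (seq T) :=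
  match n, l with
  | 0, _ => [:: [::]]
  | _.+1, [::] => [::]
  | n'.+1, a :: l' => [seq a :: A | A <- subseqs_of_size n' l'] ++ subseqs_of_size n l'
  end.

Lemma mem_subseqs_of_size (T : eqType) (A U : seq T) :
  subseq A U -> A \in subseqs_of_size (size A) U.
Proof.
elim: U A => [|a U IH] [|b A] //=; rewrite ?mem_head //.
by case: eqP => [-> /IH h|_ /IH h]; rewrite mem_cat ?(map_f _ h) ?h ?orbT.
Qed.

Lemma C24_uniq_nonzero (s : seq C2_4) : uniq s -> 0%R \notin s ->
  exists2 A, subseq A (iota 1 15) & perm_eq s (map bitvec A).
Proof.
move=> uniq_s s0; set l := map nat_of_C24 s.
have s_bitvec : s = map bitvec l by rewrite -map_comp (eq_map nat_of_C24K) map_id.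
have uniq_l : uniq l by rewrite map_inj_uniq //; apply: can_inj nat_of_C24K.
have l_sub : {subset l <= iota 1 15}.
  move=> _ /mapP[g gs ->]; rewrite mem_iota nat_of_C24_lt16 andbT lt0n.
  by apply: contraNneq s0 => g0; rewrite -(nat_of_C24K g) g0 bitvec0 in gs.
exists [seq n <- iota 1 15 | n \in l]; first exact: filter_subseq.
rewrite {1}s_bitvec perm_map // uniq_perm ?filter_uniq ?iota_uniq // => n.
by rewrite mem_filter; case: (boolP (n \in l)) => // /l_sub.
Qed.

(* The value of D_k(C_2^4) for k >= 1; for k = 0 it is only an upper bound. *)
Definition D_C24 (k : nat) : nat := minn (3 * k + 2) (2 * k + 5).

Lemma zs_search_D_C24 :
  all (fun k => all (zs_search k) (subseqs_of_size (D_C24 k) (iota 1 15))) (iota 1 5).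
Proof. by vm_compute. Qed.

Lemma has_zs_C24_uniq k (s : seq C2_4) : uniq s -> 0%R \notin s ->
  D_C24 k <= size s -> has_k_disjoint_zs k s.
Proof.
move=> uniq_s s0 Ds; have [A subA pA] := C24_uniq_nonzero uniq_s s0.
have size_A : size A = size s by rewrite (perm_size pA) size_map.
apply/(has_zs_perm _ pA); case: k Ds => [|k] Ds; first exact: has_zs0.
have [k_le4|k_gt4] := leqP k 4; last first.
  by have := size_subseq subA; rewrite size_iota size_A /D_C24 in Ds *; lia.
set n := D_C24 k.+1; have size_take : size (take n A) = n by rewrite size_takel ?size_A.
have := mem_subseqs_of_size (subseq_trans (take_subseq A n) subA).
rewrite size_take => take_in; have k_in : k.+1 \in iota 1 5 by rewrite mem_iota; lia.
have /allP /(_ _ take_in) /zs_searchP := allP zs_search_D_C24 _ k_in.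
by move/(has_zs_catr (map bitvec (drop n A))); rewrite -map_cat cat_take_drop.
Qed.

Lemma has_zs_C24 k (s : seq C2_4) : D_C24 k <= size s -> has_k_disjoint_zs k s.
Proof.
elim: {s}(size s).+1 {-2}s (ltnSn (size s)) k => // n IH s lt_s_n [|k] Ds.
  exact: has_zs0.
have IH_drop (s' : seq C2_4) : size s' < size s <= (size s').+2 -> has_k_disjoint_zs k s'.
  have Dstep : D_C24 k + 2 <= D_C24 k.+1 by rewrite /D_C24; lia.
  by move=> size_s'; apply: IH; lia.
have [s0|s0] := boolP (0%R \in s).
  apply/(has_zs_perm _ (perm_to_rem s0)); apply: (has_zs_block (t := [:: 0%R])) => //.
    by rewrite big_seq1.
  by apply: IH_drop; rewrite (perm_size (perm_to_rem s0)) /= ltnSn leqnSn.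
have [uniq_s|/not_uniq_perm_pair [x [s' ps]]] := boolP (uniq s).
  exact: has_zs_C24_uniq.
apply/(has_zs_perm _ ps); apply: (has_zs_block (t := [:: x; x])) => //.
  by rewrite big_cons big_seq1 C24_addxx.
by apply: IH_drop; rewrite (perm_size ps) /= leqnSn leqnn.
Qed.

Lemma no_zs1_C24 : ~ has_k_disjoint_zs 1 (map bitvec [:: 1; 2; 4; 8]).
Proof. by move/zs_searchP; vm_compute. Qed.

Lemma no_zs2_C24 : ~ has_k_disjoint_zs 2 (map bitvec [:: 1; 2; 3; 4; 5; 6; 8]).
Proof. by move/zs_searchP; vm_compute. Qed.

Lemma no_zs_pad_C24 m :
  ~ has_k_disjoint_zs (m + 3) (map bitvec (nseq m.*2 1 ++ iota 1 10)).
Proof.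
elim: m => [|m IH]; first by move/zs_searchP; vm_compute.
move=> zs; apply: IH; apply: (has_zs_pairN (g := bitvec 1)).
  by rewrite bitvec_eq0.
by rewrite C24_oppr.
Qed.

Lemma is_Dk_C24 k : (0 < k)%N -> is_Dk C2_4 k (D_C24 k).
Proof.
move=> k_gt0; have bound : Dk_bound C2_4 k (D_C24 k) by move=> s; apply: has_zs_C24.
case: k k_gt0 bound => [|[|[|k]]] // _ bound.
- exact: is_Dk_witness bound _ no_zs1_C24.
- exact: is_Dk_witness bound _ no_zs2_C24.
- apply: (is_Dk_witness (w := map bitvec (nseq k.*2 1 ++ iota 1 10)) _ bound).
  + by rewrite /D_C24; lia.
  + by rewrite size_map size_cat size_nseq size_iota /D_C24 -mul2n; lia.
  + by rewrite -addn3; apply: no_zs_pad_C24.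
Qed.

Lemma is_exp_C24 : is_exp C2_4 2.
Proof.
split=> // [g|m m_gt0 mm0]; first by rewrite mulr2n C24_addxx.
case: m m_gt0 mm0 => [|[|m]] // _ /(_ (bitvec 1)) /eqP.
by rewrite mulr1n bitvec_eq0.
Qed.

Theorem theorem7p9 :
  [/\ is_D0 C2_4 5, is_kD C2_4 3, is_Dk C2_4 1 5 & is_Dk C2_4 2 8].
Proof.
have lin3 : eventually_linear_from C2_4 5 2 3.
  move=> k k_ge3; have -> : 5 + k * 2 = D_C24 k by rewrite /D_C24; lia.
  by apply: is_Dk_C24; lia.
have D0 : is_D0 C2_4 5 by exists 2; split; [exact: is_exp_C24 | exists 3].
split=> //; [|exact: (is_Dk_C24 (k := 1)) | exact: (is_Dk_C24 (k := 2))].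
exists 5, 2; split=> // [|k1 k1_gt0 lin_k1]; first exact: is_exp_C24.
rewrite leqNgt; apply/negP => k1_lt3.
by have := is_Dk_uniq (lin_k1 2 k1_lt3) (is_Dk_C24 (k := 2) isT).
Qed.
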